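(* Let \(\mathcal{I}\) be an instance of 3-SAT and let \(G(\mathcal{I})\), \(T(\mathcal{I})\) be as constructed below. If \(\mathcal{I}\) has a satisfying assignment, then \(T(\mathcal{I})\) is the \(\mathcal{F}\)-tree of some MCS ordering of \(G(\mathcal{I})\), and therefore also the \(\mathcal{F}\)-tree of some MNS ordering of \(G(\mathcal{I})\).
   Context: Let \(\mathcal{I}\) have variables \(x_1,\dots,x_k\) and clauses \(C_1,\dots,C_l\), each a disjunction of three literals. \(G(\mathcal{I})\) has vertices: literal vertices \(X=\{x_1,\dots,x_k,\overline{x_1},\dots,\overline{x_k}\}\), clause vertices \(c_1,\dots,c_l\), and six vertices \(r,p,q,a,b,t\). Edges: any two vertices of \(X\) are adjacent except the pairs \(x_j\overline{x_j}\); the clause vertices are pairwise nonadjacent; \(c_i\) is adjacent to every vertex of \(X\) except the three literal vertices of the literals of \(C_i\); each of \(r,p,q,a\) is adjacent to all literal vertices and all clause vertices; \(b\) is adjacent to all literal vertices; additionally the edges \(ab,ap,aq,bq,br,bt,pr,qr,qt\); no other edges. \(T(\mathcal{I})\) is the spanning tree consisting of all edges of \(G(\mathcal{I})\) incident to \(r\) together with the edges \(pa\) and \(bt\). With \(n\) the number of vertices: an MCS ordering is produced by repeatedly choosing an unnumbered vertex with the largest number of numbered neighbors; an MNS ordering uses set labels (all \(\emptyset\), start vertex gets \(\{n+1\}\); repeatedly pick an unnumbered vertex with inclusion-maximal label as \(v_j\) and add \(j\) to the labels of its unnumbered neighbors); ties are arbitrary. The \(\mathcal{F}\)-tree of an ordering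 \((v_1,\dots,v_n)\) has, for each \(v\ne v_1\), an edge from \(v\) to its leftmost neighbor in the ordering. *)

From mathcomp Require Import all_boot.
Set Implicit Arguments. Unset Strict Implicit. Unset Printing Implicit Defensive.

(* A literal over variables x_0..x_{k-1}: (j, true) = x_j, (j, false) = ~x_j. *)
Definition literal (k : nat) := ('I_k * bool)%type.
Definition instance (k l : nat) := 'I_l -> 3.-tuple (literal k).

Definition lit_true k (f : 'I_k -> bool) (x : literal k) : bool := f x.1 == x.2.

Definition satisfiable k l (I : instance k l) : Prop :=
  exists f : 'I_k -> bool, forall i : 'I_l, has (lit_true f) (I i).

(* vertices: literal vertices, clause vertices, and six special vertices
   indexed 0..5 = r, p, q, a, b, t *)
Definition vert (k l : nat) := ((literal k + 'I_l) + 'I_6)%type.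

Definition vr {k l} : vert k l := inr (@Ordinal 6 0 isT).
Definition vp {k l} : vert k l := inr (@Ordinal 6 1 isT).
Definition vq {k l} : vert k l := inr (@Ordinal 6 2 isT).
Definition va {k l} : vert k l := inr (@Ordinal 6 3 isT).
Definition vb {k l} : vert k l := inr (@Ordinal 6 4 isT).
Definition vt {k l} : vert k l := inr (@Ordinal 6 5 isT).

(* edges among special vertices: ab, ap, aq, bq, br, bt, pr, qr, qt *)
Definition special_edges : seq (nat * nat) :=
  [:: (3,4); (3,1); (3,2); (4,2); (4,0); (4,5); (1,0); (2,0); (2,5)].

Definition special_adj (s1 s2 : 'I_6) : bool :=
  ((nat_of_ord s1, nat_of_ord s2) \in special_edges) ||
  ((nat_of_ord s2, nat_of_ord s1) \in special_edges).

Definition adj0 k l (I : instance k l) (u v : vert k l) : bool :=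
  match u, v with
  | inl (inl x), inl (inl y) =>
      (x != y) && ~~ ((x.1 == y.1) && (x.2 != y.2))
  | inl (inr i), inl (inl x) => x \notin (I i : seq (literal k))
  | inl (inr _), inl (inr _) => false
  | inr s, inl (inl _) => nat_of_ord s \in [:: 0; 1; 2; 3; 4]  (* r,p,q,a,b *)
  | inr s, inl (inr _) => nat_of_ord s \in [:: 0; 1; 2; 3]     (* r,p,q,a *)
  | inr s1, inr s2 => special_adj s1 s2
  | _, _ => false
  end.

Definition G_adj k l (I : instance k l) : rel (vert k l) :=
  fun u v => adj0 I u v || adj0 I v u.

Definition T_edges k l (I : instance k l) : {set {set vert k l}} :=
  [set [set vr; v] | v in [pred v | G_adj I vr v]]
  :|: [set [set vp; va]; [set vb; vt]].

Definition is_ordering (V : finType) (s : seq V) : bool := perm_eq s (enum V).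

Definition is_MCS_ordering (V : finType) (e : rel V) (s : seq V) : Prop :=
  is_ordering s /\
  forall (j : nat) (w : V), j < size s -> w \notin take j s ->
    count (e w) (take j s) <= count (e (nth w s j)) (take j s).

(* MNS label of a vertex w after j vertices have been numbered: the set of
   positions i < j whose vertex is adjacent to w (position i, 0-based, stands
   for the number i+1 of the paper; the extra label n+1 of the start vertex
   only matters before the first step, where it forces v_1 to be the start
   vertex, which may be any vertex). *)
Definition mns_label (V : finType) (e : rel V) (s : seq V) (j : nat) (w : V)
  : {set 'I_#|V|} :=
  [set i : 'I_#|V| | (i < j) && e (nth w s i) w].

Definition is_MNS_ordering (V : finType) (e : rel V) (s : seq V) : Prop :=
  is_ordering s /\
  forall (j : nat) (w : V), j < size s -> w \notin take j s ->
    ~~ (mns_label e s j (nth w s j) \proper mns_label e s j w).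

Definition leftmost_nb (V : finType) (e : rel V) (s : seq V) (v : V) : V :=
  nth v s (find (e v) s).

Definition F_tree (V : finType) (e : rel V) (s : seq V) : {set {set V}} :=
  [set [set v; leftmost_nb e s v] | v in [pred v | (v \in s) && (v != head v s)]].

From mathcomp Require Import all_boot zify.
Set Implicit Arguments. Unset Strict Implicit. Unset Printing Implicit Defensive.

(** Given a satisfying assignment [f], number r, p, the true literals, b, q, a,
    the false literals, then the clause vertices by decreasing number of
    neighbours among the vertices numbered so far, and finally t.  Each vertex of
    this order is adjacent to all, or all but one, of the vertices numbered before
    it, while every vertex after b misses one of r, p and the true literals; for a
    clause vertex this is the literal satisfying it.  Clause vertices and t have
    no neighbour among the clause vertices, so from there on the sorting decides.
    The leftmost neighbour of every neighbour of r is r, that of a is p and that of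
    t is b, which gives T(I).  Finally an MCS ordering is an MNS ordering, since a
    proper inclusion of labels means strictly more numbered neighbours. *)

Section Orderings.
Variables (V : finType) (e : rel V).

Lemma count_le_adj_all (P : seq V) v w :
  all (e v) P -> count (e w) P <= count (e v) P.
Proof. by rewrite all_count => /eqP ->; exact: count_size. Qed.

Lemma count_nonadj (P : seq V) u : {in P, forall x, ~~ e u x} -> count (e u) P = 0.
Proof. by move=> nadj; apply/eqP; rewrite -leqn0 leqNgt -has_count; apply/hasPn. Qed.

Lemma count_le_adj_but_one (P : seq V) v w y :
  uniq P -> {in P, forall x, ~~ e v x -> x = y} -> ~~ all (e w) P ->
  count (e w) P <= count (e v) P.
Proof.
move=> P_uniq miss_v miss_w.
have lt_w : count (e w) P < size P by rewrite ltn_neqAle count_size -all_count miss_w.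
have le_v : count (predC (e v)) P <= count (pred1 y) P.
  rewrite -!size_filter; apply: uniq_leq_size; first exact: filter_uniq.
  by move=> x; rewrite !mem_filter /= => /andP [nvx xP]; rewrite xP (miss_v x xP nvx) eqxx.
have le_1 : count (pred1 y) P <= 1 by rewrite count_uniq_mem // leq_b1.
have := count_predC (e v) P; lia.
Qed.

Lemma MCS_ordering_by_index (s : seq V) :
  is_ordering s ->
  (forall v w, index v s < index w s ->
     count (e w) (take (index v s) s) <= count (e v) (take (index v s) s)) ->
  is_MCS_ordering e s.
Proof.
move=> s_ord step; split=> // j w lt_j w_new.
have s_uniq : uniq s by rewrite (perm_uniq s_ord) enum_uniq.
have w_in : w \in s by rewrite (perm_mem s_ord) mem_enum.
have idx_v : index (nth w s j) s = j by rewrite index_uniq.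
have : j <= index w s by rewrite leqNgt -in_take.
rewrite leq_eqVlt => /predU1P [->|lt_w]; first by rewrite nth_index.
by rewrite -{1 3}idx_v; apply: step; rewrite idx_v.
Qed.

Lemma card_mns_label (s : seq V) j u :
  symmetric e -> j <= size s -> j <= #|V| ->
  #|mns_label e s j u| = count (e u) (take j s).
Proof.
move=> e_sym j_s j_V.
rewrite -(map_nth_iota0 u j_s) count_map -sum1_count -[X in iota 0 X]subn0.
rewrite big_mkord (big_ord_widen_cond _ _ (fun _ => 1) j_V) sum1dep_card.
by apply: eq_card => i; rewrite !inE andbC e_sym.
Qed.

Lemma MCS_MNS_ordering (s : seq V) :
  symmetric e -> is_MCS_ordering e s -> is_MNS_ordering e s.
Proof.
move=> e_sym [s_ord mcs]; split=> // j w lt_j w_new.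
have le_j : j <= size s := ltnW lt_j.
have le_jV : j <= #|V| by rewrite cardE -(perm_size s_ord).
by apply/negP => /proper_card; rewrite !card_mns_label // ltnNge mcs.
Qed.

End Orderings.

Variant special_vert_spec (s : 'I_6) : Prop :=
  | SpecialR of s = @Ordinal 6 0 isT
  | SpecialP of s = @Ordinal 6 1 isT
  | SpecialQ of s = @Ordinal 6 2 isT
  | SpecialA of s = @Ordinal 6 3 isT
  | SpecialB of s = @Ordinal 6 4 isT
  | SpecialT of s = @Ordinal 6 5 isT.

Lemma special_vertP (s : 'I_6) : special_vert_spec s.
Proof.
case: s => -[|[|[|[|[|[|//]]]]]] i; rewrite (bool_irrelevance i isT);
  [exact: SpecialR | exact: SpecialP | exact: SpecialQ | exact: SpecialA | exact: SpecialB
  | exact: SpecialT].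
Qed.

Section Adjacency.
Variables (k l : nat) (I : instance k l).
Local Notation adj := (G_adj I).

Lemma G_adj_sym : symmetric adj.
Proof. by move=> u v; rewrite /G_adj orbC. Qed.

Lemma adj_lit_lit (x y : literal k) :
  adj (inl (inl x)) (inl (inl y)) = (x != y) && ~~ ((x.1 == y.1) && (x.2 != y.2)).
Proof. by rewrite /G_adj /= (eq_sym y) (eq_sym y.1) (eq_sym y.2) orbb. Qed.

Lemma adj_clause_lit c (x : literal k) :
  adj (inl (inr c)) (inl (inl x)) = (x \notin (I c : seq _)).
Proof. by rewrite /G_adj /= orbF. Qed.

Lemma adj_special_lit (s : 'I_6) (x : literal k) :
  adj (inr s) (inl (inl x)) = (nat_of_ord s \in [:: 0; 1; 2; 3; 4]).
Proof. by rewrite /G_adj /= orbF. Qed.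

Lemma nonadj_vr v : v != vr -> ~~ adj v vr -> v = va \/ v = vt.
Proof. by case: v => [[x|c]|s] //; case: (special_vertP s) => ->; auto. Qed.

End Adjacency.

Local Ltac case_special s := case: (special_vertP s) => -> //=; try lia.

Section McsOrder.
Variables (k l : nat) (I : instance k l) (f : 'I_k -> bool).
Hypothesis f_sat : forall i, has (lit_true f) (I i).
Local Notation adj := (G_adj I).

Definition lit_verts (g : 'I_k -> bool) : seq (vert k l) :=
  [seq inl (inl (j, g j)) | j <- enum 'I_k].
Definition base_order : seq (vert k l) :=
  [:: vr; vp] ++ lit_verts f ++ [:: vb; vq; va] ++ lit_verts (fun j => ~~ f j).
Definition clause_weight (c : 'I_l) : nat := count (adj (inl (inr c))) base_order.
Definition sorted_clauses : seq 'I_l :=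
  sort (fun c d => clause_weight d <= clause_weight c) (enum 'I_l).
Definition clause_verts : seq (vert k l) := [seq inl (inr c) | c <- sorted_clauses].
Definition mcs_order : seq (vert k l) := base_order ++ clause_verts ++ [:: vt].

Definition pos (x : vert k l) : nat :=
  match x with
  | inl (inl (j, b)) => if b == f j then 2 + j else 5 + k + j
  | inl (inr c) => 5 + 2 * k + index c sorted_clauses
  | inr s => nth 0 [:: 0; 1; 3 + k; 4 + k; 2 + k; 5 + 2 * k + l] s
  end.

Definition numbered (v : vert k l) : seq (vert k l) := take (pos v) mcs_order.

Definition max_numbered_adj (v w : vert k l) : bool :=
  count (adj w) (numbered v) <= count (adj v) (numbered v).

Lemma size_lit_verts g : size (lit_verts g) = k.
Proof. by rewrite size_map size_enum_ord. Qed.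

Lemma size_base_order : size base_order = 5 + 2 * k.
Proof. by rewrite /base_order !size_cat !size_lit_verts /=; lia. Qed.

Lemma size_clause_verts : size clause_verts = l.
Proof. by rewrite size_map size_sort size_enum_ord. Qed.

Lemma size_mcs_order : size mcs_order = 6 + 2 * k + l.
Proof. by rewrite /mcs_order size_cat size_base_order size_cat size_clause_verts /=; lia. Qed.

Lemma mem_sorted_clauses c : c \in sorted_clauses.
Proof. by rewrite mem_sort mem_enum. Qed.

Lemma index_sorted_clauses_lt c : index c sorted_clauses < l.
Proof. by rewrite -{2}size_clause_verts size_map index_mem mem_sorted_clauses. Qed.

Lemma clause_weight_sorted c d :
  index c sorted_clauses < index d sorted_clauses -> clause_weight d <= clause_weight c.
Proof.
have weight_tr : transitive (fun c d => clause_weight d <= clause_weight c).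
  by move=> c1 c2 c3 le21 le32; apply: leq_trans le32 le21.
have := sort_sorted (fun c d => leq_total (clause_weight d) (clause_weight c)) (enum 'I_l).
by move/sorted_ltn_index => /(_ weight_tr c d); apply; rewrite ?mem_sorted_clauses.
Qed.

Lemma two_le_clause_weight c : 2 <= clause_weight c.
Proof. by rewrite /clause_weight /base_order count_cat; apply: leq_addr. Qed.

Lemma mem_lit_verts g x :
  (x \in lit_verts g) = if x is inl (inl (j, b)) then b == g j else false.
Proof.
apply/mapP; case: x => [[[j b]|c]|s] /=; try by case.
case: eqP => [->|b_ne]; first by exists j; rewrite ?mem_enum.
by case=> i _ [eq_j eq_b]; apply: b_ne; rewrite eq_b eq_j.
Qed.

Lemma index_lit_verts g j : index (inl (inl (j, g j))) (lit_verts g) = j.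
Proof. by rewrite index_map ?index_enum_ord // => i i' []. Qed.

Lemma mem_clause_verts x : (x \in clause_verts) = if x is inl (inr c) then true else false.
Proof.
apply/mapP; case: x => [[[j b]|c]|s] /=; try by case.
by exists c; rewrite ?mem_sorted_clauses.
Qed.

Lemma mem_mcs_order x : x \in mcs_order.
Proof.
rewrite !mem_cat !mem_lit_verts mem_clause_verts.
case: x => [[[j b]|c]|s] //; last by case_special s.
by rewrite /=; case: b; case: (f j); rewrite ?orbT.
Qed.

Lemma index_mcs_order x : index x mcs_order = pos x.
Proof.
rewrite /mcs_order /base_order -!catA.
case: x => [[[j b]|c]|s]; last case_special s;
  do 4 rewrite /= ?index_cat ?mem_lit_verts ?mem_clause_verts /=;
  rewrite !size_lit_verts ?size_clause_verts; try lia.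
- case: (eqVneq b (f j)) => [->|b_ne]; first by rewrite index_lit_verts; lia.
  have -> : b = ~~ f j by case: b b_ne; case: (f j).
  rewrite (index_lit_verts (fun j => ~~ f j)) eqxx.
  by case: (f j) => /=; lia.
- by rewrite index_map; [lia | move=> c' d' []].
Qed.

Lemma uniq_mcs_order : uniq mcs_order.
Proof.
apply/card_uniqP.
rewrite (eq_card (B := {: vert k l})) => [|x]; last by rewrite mem_mcs_order.
by rewrite size_mcs_order !card_sum card_prod card_bool !card_ord; lia.
Qed.

Lemma is_ordering_mcs_order : is_ordering mcs_order.
Proof.
apply: uniq_perm; rewrite ?enum_uniq ?uniq_mcs_order // => x.
by rewrite mem_mcs_order mem_enum.
Qed.

Lemma mem_numbered x v : (x \in numbered v) = (pos x < pos v).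
Proof. by rewrite in_take ?mem_mcs_order // index_mcs_order. Qed.

Lemma pos_lt x : pos x < 6 + 2 * k + l.
Proof. by rewrite -size_mcs_order -index_mcs_order index_mem mem_mcs_order. Qed.

Lemma nonadj_before_vb w : 2 + k < pos w -> exists2 x, pos x < 2 + k & ~~ adj w x.
Proof.
case: w => [[[j b]|c]|s]; last by case_special s => _; [exists vp | exists vr | exists vr].
- rewrite /=; case: eqP => [_|b_ne] lt_w; first by have := ltn_ord j; lia.
  exists (inl (inl (j, f j))); rewrite /= ?eqxx ?ltn_add2l //.
  by rewrite adj_lit_lit /= eqxx (introN eqP b_ne) andbF.
- have /hasP [[j b] lit_in /eqP /= fj_b] := f_sat c; exists (inl (inl (j, b))).
    by rewrite /= fj_b eqxx ltn_add2l.
  by rewrite adj_clause_lit lit_in.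
Qed.

Lemma max_numbered_adj_all v w :
  (forall x, pos x < pos v -> adj v x) -> max_numbered_adj v w.
Proof. by move=> adj_v; apply/count_le_adj_all/allP => x; rewrite mem_numbered => /adj_v. Qed.

Lemma max_numbered_adj_but_one v w y :
  2 + k <= pos v -> pos v < pos w ->
  (forall x, pos x < pos v -> ~~ adj v x -> x = y) -> max_numbered_adj v w.
Proof.
move=> late_v lt_w miss_v; apply: (count_le_adj_but_one (y := y)).
- by rewrite take_uniq ?uniq_mcs_order.
- by move=> x; rewrite mem_numbered; apply: miss_v.
- have [|x lt_x nadj] := nonadj_before_vb (w := w); first lia.
  by apply/allPn; exists x; rewrite ?mem_numbered //; lia.
Qed.

Lemma max_numbered_adj_lit (x : literal k) w :
  pos (inl (inl x)) < pos w -> max_numbered_adj (inl (inl x)) w.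
Proof.
case: x => j b; rewrite [pos _]/=; have j_k := ltn_ord j.
case: (eqVneq b (f j)) => [-> | b_ne] lt_w.
- apply: max_numbered_adj_all => -[[[j' b']|c]|s]; rewrite [pos (inl (inl (j, _)))]/= eqxx;
    last by case_special s.
  + rewrite /=; case: eqP => [_ lt_j|_]; last lia.
    have j_ne : (j == j') = false by apply: contraTF lt_j => /eqP ->; rewrite ltnn.
    by rewrite adj_lit_lit /= xpair_eqE j_ne.
  + rewrite /=; lia.
- apply: (max_numbered_adj_but_one (y := inl (inl (j, f j))));
    rewrite [pos (inl (inl (j, b)))]/= (negbTE b_ne) //; first lia.
  move=> -[[[j' b']|c]|s]; last by case_special s.
  + rewrite /=; case: (eqVneq j' j) => [-> | j_ne].
      by case: (eqVneq b' (f j)) => [-> // | _]; rewrite ltnn.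
    by rewrite adj_lit_lit /= xpair_eqE (eq_sym j j') (negbTE j_ne).
  + rewrite /=; lia.
Qed.

Lemma count_adj_vt_base : count (adj vt) base_order = 2.
Proof.
have lits0 s : (forall x, x \in s -> exists y, x = inl (inl y)) -> count (adj vt) s = 0.
  by move=> s_lits; apply: count_nonadj => x /s_lits [y ->]; rewrite adj_special_lit.
rewrite /base_order !count_cat /= !lits0 // => -[[y|c]|s];
  rewrite ?mem_lit_verts // => _; by exists y.
Qed.

Lemma count_adj_clause_prefix u n :
  (if u is inl (inr _) then true else u == vt) -> count (adj u) (take n clause_verts) = 0.
Proof.
move=> u_late; apply: count_nonadj => x /mem_take; rewrite mem_clause_verts.
by case: x => [[x|d]|s] // _; case: u u_late => [[y|c]|s] //; case: (special_vertP s) => ->.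
Qed.

Lemma numbered_clause c :
  numbered (inl (inr c)) = base_order ++ take (index c sorted_clauses) clause_verts.
Proof.
rewrite /numbered [pos _]/= /mcs_order take_cat size_base_order ltnNge leq_addr /= addKn.
by rewrite take_cat size_clause_verts index_sorted_clauses_lt.
Qed.

Lemma max_numbered_adj_clause c w :
  pos (inl (inr c)) < pos w -> max_numbered_adj (inl (inr c)) w.
Proof.
rewrite /max_numbered_adj numbered_clause !(count_cat _ base_order).
rewrite (count_adj_clause_prefix (u := inl (inr c))) // addn0.
case: w => [[[j b]|d]|s]; rewrite [_ < _]/=.
- by case: eqP; have := ltn_ord j; lia.
- by rewrite count_adj_clause_prefix // addn0 ltn_add2l; apply: clause_weight_sorted.
- case: (special_vertP s) => ->; rewrite [_ < _]/=; try lia.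
  by rewrite count_adj_clause_prefix // count_adj_vt_base two_le_clause_weight.
Qed.

Lemma max_numbered_adj_special (s : 'I_6) w :
  pos (inr s) < pos w -> max_numbered_adj (inr s) w.
Proof.
case: (special_vertP s) => -> {s}; rewrite [pos (inr _)]/= => lt_w.
- by apply: max_numbered_adj_all => x /=; rewrite ltn0.
- apply: max_numbered_adj_all => -[[[j b]|c]|s]; last by case_special s.
  + by rewrite /=; case: eqP; lia.
  + by rewrite /=; lia.
- apply: (max_numbered_adj_but_one (y := vp)) => //=; try lia.
  by move=> -[[[j b]|c]|s]; [by [] | rewrite /=; lia | case_special s].
- apply: (max_numbered_adj_but_one (y := vr)) => //=; try lia.
  by move=> -[[[j b]|c]|s]; [by [] | by [] | case_special s].
- apply: (max_numbered_adj_but_one (y := vp)) => //=; try lia.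
  by move=> -[[[j b]|c]|s]; [by [] | rewrite /=; lia | case_special s].
- by have := pos_lt w; lia.
Qed.

Lemma is_MCS_ordering_mcs_order : is_MCS_ordering adj mcs_order.
Proof.
apply: MCS_ordering_by_index => [|v w]; first exact: is_ordering_mcs_order.
rewrite !index_mcs_order; case: v => [[x|c]|s].
- exact: max_numbered_adj_lit.
- exact: max_numbered_adj_clause.
- exact: max_numbered_adj_special.
Qed.

Lemma leftmost_nb_adj_vr v : adj v vr -> leftmost_nb adj mcs_order v = vr.
Proof. by move=> v_r; rewrite /leftmost_nb /mcs_order /base_order /= v_r. Qed.

Lemma leftmost_nb_va : leftmost_nb adj mcs_order va = vp.
Proof. by []. Qed.

Lemma leftmost_nb_vt : leftmost_nb adj mcs_order vt = vb.
Proof.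
have -> : mcs_order =
    rcons ([:: vr; vp] ++ lit_verts f) vb ++
      [:: vq; va] ++ lit_verts (fun j => ~~ f j) ++ clause_verts ++ [:: vt].
  by rewrite /mcs_order /base_order -cats1 -!catA.
apply: nth_rcons_cat_find => //; rewrite has_cat /=.
by apply/hasPn => -[[y|c]|s]; rewrite mem_lit_verts // => _; rewrite adj_special_lit.
Qed.

Lemma F_tree_mcs_order : F_tree adj mcs_order = T_edges I.
Proof.
have head_vr x : head x mcs_order = vr by [].
apply/eqP; rewrite eqEsubset; apply/andP; split; apply/subsetP => E.
- case/imsetP => v /andP [_]; rewrite head_vr => v_ne ->; rewrite in_setU in_set2.
  have [v_r|v_nr] := boolP (adj v vr).
    rewrite leftmost_nb_adj_vr // setUC; apply/orP; left.
    by apply/imsetP; exists v; rewrite // inE G_adj_sym.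
  case: (nonadj_vr v_ne v_nr) => ->.
    by rewrite leftmost_nb_va setUC eqxx orbT.
  by rewrite leftmost_nb_vt setUC eqxx !orbT.
- rewrite in_setU in_set2 => /orP [/imsetP [v]|/orP [] /eqP ->].
  + rewrite inE => r_v ->; apply/imsetP; exists v.
      by rewrite inE mem_mcs_order head_vr; apply: contraTneq r_v => ->.
    by rewrite leftmost_nb_adj_vr 1?G_adj_sym // setUC.
  + apply/imsetP; exists va; last by rewrite leftmost_nb_va setUC.
    by rewrite inE mem_mcs_order head_vr.
  + apply/imsetP; exists vt; last by rewrite leftmost_nb_vt setUC.
    by rewrite inE mem_mcs_order head_vr.
Qed.

End McsOrder.

Theorem lemma11 (k l : nat) (I : instance k l) :
  satisfiable I ->
  (exists s : seq (vert k l),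
      is_MCS_ordering (G_adj I) s /\ F_tree (G_adj I) s = T_edges I) /\
  (exists s : seq (vert k l),
      is_MNS_ordering (G_adj I) s /\ F_tree (G_adj I) s = T_edges I).
Proof.
case=> f f_sat; have mcs := is_MCS_ordering_mcs_order f_sat.
split; exists (mcs_order I f); rewrite F_tree_mcs_order; split=> //.
exact: MCS_MNS_ordering (@G_adj_sym k l I) mcs.
Qed.
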